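(* Let $n\in\mathbb{N}$ and let $f_0,f_1,\dots,f_{n-1}$ be complex-valued functions on the unit disc $\mathbb{D}$. For $z\in\mathbb{D}$ and $j=0,\dots,n-1$ define $$D_j(z)=\sum_{k=0}^{n-1}|z|^{jk}f_k(z)\frac{(1-|z|^2)^n}{(1-|z|^{j+2})^k}.$$ Then there exist functions $b_{jk}$ on $\{0<|z|<1\}$, bounded on $\{\frac12<|z|<1\}$, such that for each $0\le k\le n-1$, $$f_k(z)(1-|z|)^{n-k}=\sum_{j=0}^{n-1}b_{jk}(z)D_j(z),\qquad 0<|z|<1.$$ *)

From Stdlib Require Import Reals List.
From Coquelicot Require Import Coquelicot.
Open Scope R_scope.

Definition csum (n : nat) (g : nat -> C) : C :=
  fold_right Cplus (RtoC 0) (map g (seq 0 n)).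

Definition Dfun (n : nat) (f : nat -> C -> C) (j : nat) (z : C) : C :=
  csum n (fun k =>
    Cmult (RtoC (Cmod z ^ (j * k)))
      (Cmult (f k z)
         (RtoC ((1 - Cmod z ^ 2) ^ n / (1 - Cmod z ^ (j + 2)) ^ k)))).

From Stdlib Require Import Reals List Lra Lia.
From Coquelicot Require Import Coquelicot.
Open Scope R_scope.

(* Put r = |z|, a_k = f_k(z) (1 - r)^(n-k) and y_j = r^j (1 - r) / (1 - r^(j+2)).
   Then D_j(z) = (1 + r)^n P(y_j) with P(t) = sum_k a_k t^k, so the a_k are the
   coefficients of a polynomial of degree < n known at the n nodes y_j.  These
   nodes lie in [0, 1] and are pairwise at distance at least r^n / (n+1)^2, which
   is bounded below for r > 1/2; hence sum_k |a_k| <= K sum_j |D_j(z)| with K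
   independent of z.  Writing S = sum_j |D_j(z)| and u_j = conj(D_j)/|D_j|, the
   choice b_jk = a_k u_j / S gives sum_j b_jk D_j = a_k and |b_jk| <= K. *)

Definition rsum (n : nat) (g : nat -> R) : R := fold_right Rplus 0 (map g (seq 0 n)).

Lemma rsum_ge0 n g : (forall i, 0 <= g i) -> 0 <= rsum n g.
Proof.
  intros Hg. unfold rsum. induction (seq 0 n) as [|i s IH]; simpl; [lra|].
  specialize (Hg i). lra.
Qed.

Lemma le_rsum n g i : (forall j, 0 <= g j) -> (i < n)%nat -> g i <= rsum n g.
Proof.
  intros Hg Hi. assert (Hin : In i (seq 0 n)) by (apply in_seq; lia).
  unfold rsum. revert Hin. induction (seq 0 n) as [|j s IH]; simpl; intros Hin; [contradiction|].
  assert (Htail : 0 <= fold_right Rplus 0 (map g s)).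
  { clear IH Hin. induction s as [|k s IHs]; simpl; [lra|]. specialize (Hg k). lra. }
  destruct Hin as [<- | Hin]; [lra|].
  specialize (IH Hin). specialize (Hg j). lra.
Qed.

Lemma csum_ext n g h : (forall k, (k < n)%nat -> g k = h k) -> csum n g = csum n h.
Proof.
  intros H. unfold csum. f_equal. apply map_ext_in.
  intros k Hk. apply in_seq in Hk. apply H. lia.
Qed.

Lemma csum_scal n c g : csum n (fun k => c * g k)%C = (c * csum n g)%C.
Proof. unfold csum. induction (seq 0 n) as [|k s IH]; simpl; [|rewrite IH]; ring. Qed.

Lemma csum_RtoC n g : csum n (fun k => RtoC (g k)) = RtoC (rsum n g).
Proof.
  unfold csum, rsum. induction (seq 0 n) as [|k s IH]; simpl; [reflexivity|].
  rewrite IH, RtoC_plus. reflexivity.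
Qed.

(* A list [c_0; ...; c_(m-1)] stands for the polynomial sum_k c_k t^k. *)
Fixpoint peval (l : list C) (t : R) : C :=
  match l with nil => RtoC 0 | c :: l' => (c + t * peval l' t)%C end.

Fixpoint pquot (t0 : R) (l : list C) : list C :=
  match l with
  | _ :: (_ :: _) as l' => peval l' t0 :: pquot t0 l'
  | _ => nil
  end.

Fixpoint pnorm1 (l : list C) : R :=
  match l with nil => 0 | c :: l' => Cmod c + pnorm1 l' end.

Lemma peval_pquot t0 l t :
  peval l t = (peval l t0 + (t - t0)%R * peval (pquot t0 l) t)%C.
Proof.
  induction l as [|c [|d l] IH]; simpl peval; simpl pquot; [ring | ring |].
  simpl peval in IH. rewrite RtoC_minus in *. rewrite IH. ring.
Qed.

Lemma length_pquot t0 l : length (pquot t0 l) = pred (length l).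
Proof. induction l as [|c [|d l] IH]; simpl in *; congruence. Qed.

Lemma pnorm1_ge0 l : 0 <= pnorm1 l.
Proof. induction l as [|c l IH]; simpl; [lra|]. pose proof (Cmod_ge_0 c). lra. Qed.

Lemma Cmod_nth_le_pnorm1 (l : list C) k :
  (k < length l)%nat -> Cmod (nth k l (RtoC 0)) <= pnorm1 l.
Proof.
  revert k. induction l as [|c l IH]; intros k Hk; simpl in *; [lia|].
  destruct k as [|k].
  - pose proof (pnorm1_ge0 l). lra.
  - pose proof (IH k ltac:(lia)). pose proof (Cmod_ge_0 c). lra.
Qed.

Lemma pnorm1_pquot t0 l :
  pnorm1 l <= Cmod (peval l t0) + (1 + Rabs t0) * pnorm1 (pquot t0 l).
Proof.
  induction l as [|c [|d l] IH].
  - simpl. rewrite Cmod_0. lra.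
  - simpl. replace (c + t0 * 0)%C with c by ring. lra.
  - set (l' := d :: l) in *. set (X := peval l' t0) in *.
    change (pnorm1 (c :: l')) with (Cmod c + pnorm1 l').
    change (pquot t0 (c :: l')) with (X :: pquot t0 l').
    change (pnorm1 (X :: pquot t0 l')) with (Cmod X + pnorm1 (pquot t0 l')).
    change (peval (c :: l') t0) with (c + t0 * X)%C.
    assert (Hc : Cmod c <= Cmod (c + t0 * X)%C + Rabs t0 * Cmod X).
    { replace c with ((c + t0 * X) + - (t0 * X))%C at 1 by ring.
      rewrite <- Cmod_R, <- Cmod_mult, <- (Cmod_opp (t0 * X)%C). apply Cmod_triangle. }
    lra.
Qed.

Lemma Cmod_peval_pquot_le t0 t l s d :
  0 < d -> d <= Rabs (t - t0) ->
  Cmod (peval l t) <= s -> Cmod (peval l t0) <= s ->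
  Cmod (peval (pquot t0 l) t) <= 2 * s / d.
Proof.
  intros Hd Hsep Ht Ht0.
  assert (E : ((t - t0)%R * peval (pquot t0 l) t)%C = (peval l t - peval l t0)%C).
  { rewrite (peval_pquot t0 l t). ring. }
  assert (Hprod : Rabs (t - t0) * Cmod (peval (pquot t0 l) t) <= 2 * s).
  { rewrite <- Cmod_R, <- Cmod_mult, E. unfold Cminus.
    pose proof (Cmod_triangle (peval l t) (- peval l t0)) as Htri.
    rewrite Cmod_opp in Htri. lra. }
  pose proof (Cmod_ge_0 (peval (pquot t0 l) t)).
  apply (Rmult_le_reg_l d); [lra|].
  replace (d * (2 * s / d)) with (2 * s) by (field; lra). nra.
Qed.

(* Dividing by t - y_m removes one node: the quotient has one coefficient fewer
   and its values at the other nodes are at most 2 s / d. *)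
Lemma pnorm1_le_of_nodes m d : 0 < d -> exists K, 0 <= K /\
  forall (l : list C) (y : nat -> R) (s : R), length l = m ->
  (forall i, (i < m)%nat -> Rabs (y i) <= 1) ->
  (forall i j, (i < m)%nat -> (j < m)%nat -> i <> j -> d <= Rabs (y i - y j)) ->
  (forall j, (j < m)%nat -> Cmod (peval l (y j)) <= s) ->
  pnorm1 l <= K * s.
Proof.
  intros Hd. induction m as [|m [K [HK IH]]].
  - exists 0. split; [lra|]. intros l y s Hl _ _ _.
    destruct l; [simpl; lra | discriminate].
  - exists (1 + 4 * K / d). split.
    { pose proof (Rdiv_le_0_compat K d HK Hd). lra. }
    intros l y s Hl Hy Hsep Hval.
    set (q := pquot (y m) l).
    assert (Hs : Cmod (peval l (y m)) <= s) by (apply Hval; lia).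
    assert (Hq : pnorm1 q <= K * (2 * s / d)).
    { apply (IH q y).
      - unfold q. rewrite length_pquot, Hl. reflexivity.
      - intros i Hi. apply Hy. lia.
      - intros i j Hi Hj Hij. apply Hsep; lia.
      - intros j Hj.
        apply Cmod_peval_pquot_le; [exact Hd | apply Hsep | apply Hval | exact Hs]; lia. }
    pose proof (pnorm1_pquot (y m) l) as Hl'. fold q in Hl'.
    assert (Rabs (y m) <= 1) by (apply Hy; lia).
    pose proof (pnorm1_ge0 q).
    replace ((1 + 4 * K / d) * s) with (s + 2 * (K * (2 * s / d))) by (field; lra).
    nra.
Qed.

Lemma pow_le_one r m : 0 <= r <= 1 -> r ^ m <= 1.
Proof. intros Hr. rewrite <- (pow1 m). apply pow_incr. lra. Qed.

Lemma pow_add_le r j d : 0 <= r <= 1 -> r ^ (j + d) <= r ^ j.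
Proof.
  intros Hr. rewrite pow_add.
  pose proof (pow_le r j ltac:(lra)). pose proof (pow_le_one r d Hr). nra.
Qed.

Lemma one_sub_pow_le r m : 0 <= r <= 1 -> 1 - r ^ m <= INR m * (1 - r).
Proof.
  intros Hr. induction m as [|m IH]; [simpl; lra|].
  rewrite S_INR. simpl pow. pose proof (pow_le_one r m Hr). nra.
Qed.

Definition node (r : R) (j : nat) : R := r ^ j * (1 - r) / (1 - r ^ (j + 2)).

Definition node_gap (n : nat) (r : R) : R := r ^ n / INR (S n) ^ 2.

Lemma node_gap_pos n r : 0 < r -> 0 < node_gap n r.
Proof.
  intros Hr. unfold node_gap. apply Rdiv_lt_0_compat; [apply pow_lt; lra|].
  apply pow_lt, lt_0_INR. lia.
Qed.

Lemma node_gap_incr n r s : 0 <= r <= s -> node_gap n r <= node_gap n s.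
Proof.
  intros Hrs. unfold node_gap, Rdiv. apply Rmult_le_compat_r; [|apply pow_incr; lra].
  left. apply Rinv_0_lt_compat, pow_lt, lt_0_INR. lia.
Qed.

Lemma node_in_unit r j : 0 < r < 1 -> 0 <= node r j <= 1.
Proof.
  intros Hr. unfold node.
  pose proof (pow_lt_1_compat r (j + 2) ltac:(lra) ltac:(lia)) as Hq.
  pose proof (pow_le_one r j ltac:(lra)). pose proof (pow_le r j ltac:(lra)).
  pose proof (pow_add_le r 1 (S j) ltac:(lra)) as Hrj.
  replace (1 + S j)%nat with (j + 2)%nat in Hrj by lia. rewrite pow_1 in Hrj.
  assert (Hpos : 0 < 1 - r ^ (j + 2)) by lra.
  split.
  - apply Rdiv_le_0_compat; nra.
  - apply (Rdiv_le_1 _ _ Hpos).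
    pose proof (Rmult_le_compat_r (1 - r) _ _ ltac:(lra) H). lra.
Qed.

Lemma node_sub_succ r j : 0 < r < 1 ->
  node r j - node r (S j) = r ^ j * (1 - r) ^ 2 / ((1 - r ^ (j + 2)) * (1 - r ^ (j + 3))).
Proof.
  intros Hr. unfold node.
  pose proof (pow_lt_1_compat r (j + 2) ltac:(lra) ltac:(lia)).
  pose proof (pow_lt_1_compat r (j + 3) ltac:(lra) ltac:(lia)).
  replace (S j + 2)%nat with (j + 3)%nat by lia.
  rewrite !pow_add in *. simpl pow in *. field. lra.
Qed.

Lemma node_gap_le n r j : 0 < r < 1 -> (j + 2 <= n)%nat ->
  node_gap n r <= node r j - node r (S j).
Proof.
  intros Hr Hj. rewrite node_sub_succ by exact Hr.
  set (N := INR (S n)).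
  assert (HN : 0 < N) by (apply lt_0_INR; lia).
  assert (Hq : forall m, (0 < m <= S n)%nat -> 0 < 1 - r ^ m <= N * (1 - r)).
  { intros m Hm. pose proof (pow_lt_1_compat r m ltac:(lra) ltac:(lia)).
    pose proof (one_sub_pow_le r m ltac:(lra)).
    assert (INR m <= N) by (apply le_INR; lia). nra. }
  destruct (Hq (j + 2)%nat ltac:(lia)) as [Hq1 Hq1'].
  destruct (Hq (j + 3)%nat ltac:(lia)) as [Hq2 Hq2'].
  pose proof (pow_le r j ltac:(lra)).
  apply Rle_trans with (r ^ j * (1 - r) ^ 2 / ((N * (1 - r)) * (N * (1 - r)))).
  - replace (r ^ j * (1 - r) ^ 2 / ((N * (1 - r)) * (N * (1 - r)))) with (r ^ j / N ^ 2)
      by (field; lra).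
    unfold node_gap, Rdiv. fold N. apply Rmult_le_compat_r.
    + left. apply Rinv_0_lt_compat, pow_lt, HN.
    + replace n with (j + (n - j))%nat by lia. apply pow_add_le. lra.
  - unfold Rdiv. apply Rmult_le_compat_l; [apply Rmult_le_pos; [lra | apply pow2_ge_0]|].
    apply Rinv_le_contravar; [apply Rmult_lt_0_compat; lra|].
    apply Rmult_le_compat; lra.
Qed.

Lemma sep_of_gaps (y : nat -> R) n d : 0 <= d ->
  (forall j, (S j < n)%nat -> y (S j) + d <= y j) ->
  forall i j, (i < n)%nat -> (j < n)%nat -> i <> j -> d <= Rabs (y i - y j).
Proof.
  intros Hd Hgap.
  assert (Hlt : forall i j, (i < j < n)%nat -> y j + d <= y i).
  { intros i j. induction j as [|j IH]; intros Hij; [lia|].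
    pose proof (Hgap j ltac:(lia)).
    destruct (Nat.eq_dec i j) as [->|Hne]; [lra|].
    pose proof (IH ltac:(lia)). lra. }
  intros i j Hi Hj Hij.
  destruct (proj1 (Nat.lt_gt_cases i j) Hij) as [Hij'|Hij'].
  - pose proof (Hlt i j ltac:(lia)). unfold Rabs. destruct (Rcase_abs _); lra.
  - pose proof (Hlt j i ltac:(lia)). unfold Rabs. destruct (Rcase_abs _); lra.
Qed.

Lemma node_sep n r : 0 < r < 1 ->
  forall i j, (i < n)%nat -> (j < n)%nat -> i <> j ->
  node_gap n r <= Rabs (node r i - node r j).
Proof.
  intros Hr. apply sep_of_gaps.
  - left. apply node_gap_pos. lra.
  - intros j Hj. pose proof (node_gap_le n r j Hr ltac:(lia)). lra.
Qed.

Definition coef (n : nat) (f : nat -> C -> C) (z : C) (k : nat) : C :=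
  Cmult (f k z) (RtoC ((1 - Cmod z) ^ (n - k))).

Lemma Dfun_summand_factor r j k n : 0 < r < 1 -> (k <= n)%nat ->
  r ^ (j * k) * ((1 - r ^ 2) ^ n / (1 - r ^ (j + 2)) ^ k) =
  (1 + r) ^ n * ((1 - r) ^ (n - k) * node r j ^ k).
Proof.
  intros Hr Hk. unfold node.
  pose proof (pow_lt_1_compat r (j + 2) ltac:(lra) ltac:(lia)).
  replace (1 - r ^ 2) with ((1 - r) * (1 + r)) by ring.
  replace n with ((n - k) + k)%nat at 1 by lia.
  rewrite pow_mult, !Rpow_mult_distr, pow_add.
  unfold Rdiv. rewrite !Rpow_mult_distr, !pow_inv.
  replace (n - k + k)%nat with n by lia.
  field. apply pow_nonzero. lra.
Qed.

Lemma peval_map_seq (g : nat -> C) n t :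
  peval (map g (seq 0 n)) t = csum n (fun k => g k * RtoC (t ^ k))%C.
Proof.
  assert (Hshift : forall s, (peval (map g (seq s n)) t * RtoC (t ^ s))%C =
    fold_right Cplus (RtoC 0) (map (fun k => g k * RtoC (t ^ k))%C (seq s n))).
  { induction n as [|n IH]; intros s; simpl; [ring|].
    rewrite <- IH. simpl. rewrite RtoC_mult. ring. }
  unfold csum. rewrite <- Hshift. simpl. ring.
Qed.

Lemma Dfun_peval n f z j : 0 < Cmod z < 1 ->
  Dfun n f j z =
  (RtoC ((1 + Cmod z) ^ n) * peval (map (coef n f z) (seq 0 n)) (node (Cmod z) j))%C.
Proof.
  intros Hz. rewrite peval_map_seq, <- csum_scal.
  apply csum_ext. intros k Hk. unfold coef.
  transitivity (f k z * RtoC (Cmod z ^ (j * k) *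
    ((1 - Cmod z ^ 2) ^ n / (1 - Cmod z ^ (j + 2)) ^ k)))%C.
  { rewrite RtoC_mult. ring. }
  rewrite Dfun_summand_factor by (auto; lia). rewrite !RtoC_mult. ring.
Qed.

Lemma Cmod_coef_le_sum_Dfun n f d : 0 < d -> exists K, 0 <= K /\
  forall z, 0 < Cmod z < 1 -> d <= node_gap n (Cmod z) ->
  forall k, (k < n)%nat ->
  Cmod (coef n f z k) <= K * rsum n (fun j => Cmod (Dfun n f j z)).
Proof.
  intros Hd. destruct (pnorm1_le_of_nodes n d Hd) as [K [HK Hbound]].
  exists K. split; [exact HK|]. intros z Hz Hgap k Hk.
  set (l := map (coef n f z) (seq 0 n)).
  assert (Hlen : length l = n) by (unfold l; rewrite length_map, length_seq; reflexivity).
  assert (Hnth : nth k l (RtoC 0) = coef n f z k).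
  { unfold l. rewrite (nth_indep _ _ (coef n f z 0%nat)) by (rewrite length_map, length_seq; lia).
    rewrite map_nth, seq_nth by lia. reflexivity. }
  rewrite <- Hnth.
  eapply Rle_trans; [apply Cmod_nth_le_pnorm1; lia|].
  apply (Hbound l (node (Cmod z))); [exact Hlen | | |].
  - intros i _. pose proof (node_in_unit (Cmod z) i Hz).
    rewrite Rabs_pos_eq; lra.
  - intros i j Hi Hj Hij. eapply Rle_trans; [exact Hgap|]. apply node_sep; auto.
  - intros j Hj. apply Rle_trans with (Cmod (Dfun n f j z)).
    + rewrite Dfun_peval, Cmod_mult, Cmod_R by exact Hz. fold l.
      assert (1 <= (1 + Cmod z) ^ n) by (apply pow_R1_Rle; lra).
      rewrite Rabs_pos_eq by lra.
      pose proof (Cmod_ge_0 (peval l (node (Cmod z) j))). nra.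
    + apply (le_rsum n (fun i => Cmod (Dfun n f i z))); [intros; apply Cmod_ge_0 | exact Hj].
Qed.

Definition phase (w : C) : C := Cmult (Cconj w) (RtoC (/ Cmod w)).

Lemma phase_mul w : Cmult (phase w) w = RtoC (Cmod w).
Proof.
  unfold phase. destruct (Req_dec (Cmod w) 0) as [E|E].
  - apply Cmod_eq_0 in E. subst w. rewrite Cmod_0. ring.
  - transitivity (RtoC (Cmod w ^ 2 * / Cmod w)).
    + rewrite RtoC_mult, Cmod2_conj. ring.
    + f_equal. field. exact E.
Qed.

Lemma Cmod_phase_le w : Cmod (phase w) <= 1.
Proof.
  unfold phase. rewrite Cmod_mult, Cmod_conj, Cmod_R.
  destruct (Req_dec (Cmod w) 0) as [E|E].
  - rewrite E, Rmult_0_l. lra.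
  - pose proof (Cmod_ge_0 w).
    rewrite Rabs_pos_eq, Rinv_r; [lra | exact E |].
    left. apply Rinv_0_lt_compat. lra.
Qed.

Definition weight (n : nat) (D : nat -> C) (j : nat) : C :=
  Cmult (phase (D j)) (RtoC (/ rsum n (fun i => Cmod (D i)))).

Lemma Cmod_mul_weight_le n D j a K : 0 <= K ->
  Cmod a <= K * rsum n (fun i => Cmod (D i)) ->
  Cmod (Cmult a (weight n D j)) <= K.
Proof.
  intros HK Ha. unfold weight. set (S := rsum n (fun i => Cmod (D i))) in *.
  assert (HS : 0 <= S) by (apply rsum_ge0; intros; apply Cmod_ge_0).
  rewrite !Cmod_mult, Cmod_R.
  pose proof (Cmod_phase_le (D j)). pose proof (Cmod_ge_0 (phase (D j))).
  pose proof (Cmod_ge_0 a).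
  destruct (Req_dec S 0) as [E|E].
  - rewrite E, Rinv_0, Rabs_R0. nra.
  - assert (HS' : 0 < / S) by (apply Rinv_0_lt_compat; lra).
    rewrite Rabs_pos_eq by lra.
    apply Rle_trans with (Cmod a * / S).
    { apply Rmult_le_compat_l; [lra|].
      rewrite <- (Rmult_1_l (/ S)) at 2. apply Rmult_le_compat_r; lra. }
    apply (Rmult_le_reg_r S); [lra|]. rewrite Rmult_assoc, Rinv_l by exact E. lra.
Qed.

Lemma csum_mul_weight n D a K :
  Cmod a <= K * rsum n (fun i => Cmod (D i)) ->
  csum n (fun j => Cmult (Cmult a (weight n D j)) (D j)) = a.
Proof.
  intros Ha. unfold weight. set (S := rsum n (fun i => Cmod (D i))) in *.
  transitivity (Cmult (Cmult a (RtoC (/ S))) (csum n (fun j => RtoC (Cmod (D j))))).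
  { rewrite <- csum_scal. apply csum_ext. intros j _.
    rewrite <- (phase_mul (D j)). ring. }
  rewrite csum_RtoC. fold S. destruct (Req_dec S 0) as [E|E].
  - rewrite E, Rmult_0_r in Ha. pose proof (Cmod_ge_0 a).
    assert (Cmod a = 0) as Ha0 by lra. apply Cmod_eq_0 in Ha0. subst a. ring.
  - rewrite <- Cmult_assoc, <- RtoC_mult, Rinv_l by exact E. ring.
Qed.

Theorem lemma2p6 (n : nat) (f : nat -> C -> C) :
  exists b : nat -> nat -> C -> C,
    (forall j k : nat, (j < n)%nat -> (k < n)%nat ->
       exists M : R, forall z : C, 1/2 < Cmod z < 1 -> Cmod (b j k z) <= M) /\
    (forall k : nat, (k < n)%nat ->
       forall z : C, 0 < Cmod z < 1 ->
         Cmult (f k z) (RtoC ((1 - Cmod z) ^ (n - k))) =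
         csum n (fun j => Cmult (b j k z) (Dfun n f j z))).
Proof.
  destruct (Cmod_coef_le_sum_Dfun n f (node_gap n (1/2))) as [K [HK Hcoef]].
  { apply node_gap_pos. lra. }
  exists (fun j k z => Cmult (coef n f z k) (weight n (fun i => Dfun n f i z) j)).
  split.
  - intros j k _ Hk. exists K. intros z Hz.
    apply Cmod_mul_weight_le; [exact HK|].
    apply Hcoef; [lra | apply node_gap_incr; lra | exact Hk].
  - intros k Hk z Hz.
    destruct (Cmod_coef_le_sum_Dfun n f (node_gap n (Cmod z))) as [K' [_ Hcoef']].
    { apply node_gap_pos. lra. }
    symmetry. apply (csum_mul_weight n (fun i => Dfun n f i z) _ K').
    apply Hcoef'; [exact Hz | apply Rle_refl | exact Hk].
Qed.
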